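(* Let $S$ be a quasi-adequate semigroup with an adequate transversal $S^0$, and let $x,y$ be regular elements of $S$. Then $\overline{xy}=\overline{x}\,\overline{y}$.
   Context: For a semigroup $S$, $S^1$ is $S$ with an identity adjoined, $\mathcal{L},\mathcal{R}$ Green's relations. $\mathcal{R}^\ast=\{(a,b):\forall x,y\in S^1,\ xa=ya\iff xb=yb\}$, $\mathcal{L}^\ast=\{(a,b):\forall x,y\in S^1,\ ax=ay\iff bx=by\}$. $S$ is abundant if each $\mathcal{R}^\ast$- and $\mathcal{L}^\ast$-class contains an idempotent; adequate if also idempotents commute (then $a^+$, $a^\ast$ are the unique idempotents $\mathcal{R}^\ast$-, resp. $\mathcal{L}^\ast$-related to $a$). Quasi-adequate: abundant with idempotents forming a subsemigroup. An abundant subsemigroup $U$ of abundant $S$ is a $\ast$-subsemigroup if $\mathcal{L}^\ast(U)=\mathcal{L}^\ast(S)\cap(U\times U)$, $\mathcal{R}^\ast(U)=\mathcal{R}^\ast(S)\cap(U\times U)$. An adequate $\ast$-subsemigroup $S^0$ of abundant $S$ is an adequate transversal if each $x\in S$ has a unique $\overline{x}\in S^0$ and idempotents $e,f$ of $S$ with $x=e\overline{x}f$, $e\,\mathcal{L}\,\overline{x}^+$, $f\,\mathcal{R}\,\overline{x}^\ast$. *)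

Set Implicit Arguments.

Section Semigroup.
Variables (T : Type) (mul : T -> T -> T).

Definition associative_op : Prop :=
  forall a b c, mul a (mul b c) = mul (mul a b) c.

Definition fullset : T -> Prop := fun _ => True.

Definition idem (e : T) : Prop := mul e e = e.

(* elements of U^1 : None is the adjoined identity *)
Definition inU1 (U : T -> Prop) (o : option T) : Prop :=
  match o with None => True | Some x => U x end.

Definition lmul (o : option T) (a : T) : T :=
  match o with None => a | Some x => mul x a end.
Definition rmul (a : T) (o : option T) : T :=
  match o with None => a | Some x => mul a x end.

Definition RstarIn (U : T -> Prop) (a b : T) : Prop :=
  forall x y, inU1 U x -> inU1 U y -> (lmul x a = lmul y a <-> lmul x b = lmul y b).
Definition LstarIn (U : T -> Prop) (a b : T) : Prop :=
  forall x y, inU1 U x -> inU1 U y -> (rmul a x = rmul a y <-> rmul b x = rmul b y).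

Definition GreenL (a b : T) : Prop :=
  (a = b \/ exists s, a = mul s b) /\ (b = a \/ exists s, b = mul s a).
Definition GreenR (a b : T) : Prop :=
  (a = b \/ exists s, a = mul b s) /\ (b = a \/ exists s, b = mul a s).

Definition subsemigroup (U : T -> Prop) : Prop :=
  forall a b, U a -> U b -> U (mul a b).

Definition abundantIn (U : T -> Prop) : Prop :=
  forall a, U a ->
    (exists e, U e /\ idem e /\ RstarIn U a e) /\
    (exists f, U f /\ idem f /\ LstarIn U a f).

Definition adequateIn (U : T -> Prop) : Prop :=
  abundantIn U /\
  forall e f, U e -> U f -> idem e -> idem f -> mul e f = mul f e.

Definition quasi_adequate : Prop :=
  abundantIn fullset /\ forall e f, idem e -> idem f -> idem (mul e f).

Definition star_subsemigroup (U : T -> Prop) : Prop :=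
  subsemigroup U /\ abundantIn U /\
  (forall a b, U a -> U b -> (LstarIn U a b <-> LstarIn fullset a b)) /\
  (forall a b, U a -> U b -> (RstarIn U a b <-> RstarIn fullset a b)).

(* xb is a valid "overline x" for x w.r.t. S0:
   xb in S0 and x = e xb f with e, f idempotents of S, e L xb^+, f R xb^*,
   where xb^+ (resp. xb^* ) is the (unique, since S0 is adequate) idempotent
   of S0 that is R*- (resp. L*-) related to xb. *)
Definition transversal_rep (S0 : T -> Prop) (x xb : T) : Prop :=
  S0 xb /\
  exists e f, idem e /\ idem f /\ x = mul (mul e xb) f /\
    (exists p, S0 p /\ idem p /\ RstarIn S0 xb p /\ GreenL e p) /\
    (exists q, S0 q /\ idem q /\ LstarIn S0 xb q /\ GreenR f q).

Definition adequate_transversal (S0 : T -> Prop) : Prop :=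
  star_subsemigroup S0 /\ adequateIn S0 /\
  forall x, exists! xb, transversal_rep S0 x xb.

Definition regular (x : T) : Prop := exists a, mul (mul x a) x = x.

End Semigroup.

From Stdlib Require Import Setoid.
Set Implicit Arguments.

(* Write x = e x̄ f and y = g ȳ h as in the definition of the transversal, and
   put u = f g and k = q r, where q = x̄^* and r = ȳ^+.  In the band of
   idempotents u and k are mutually inverse (u k u = u, k u k = k).  Since x
   and y are regular, so are x̄ and ȳ; for x̄ z x̄ = x̄ and ȳ w ȳ = ȳ one gets
   k z x̄ = k = ȳ w k, hence
     x y = e x̄ u ȳ h = (e x̄ u k z) (x̄ ȳ) (w k u ȳ h).
   With t = (x̄ȳ)^+ and t' = (x̄ȳ)^*, the outer factors are absorbed:
   t (e x̄ u k z) t = t and t' (w k u ȳ h) t' = t'.  The heart of this is the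
   identity t x̄ u k = x̄ k: the element j = k z t x̄ is an idempotent with
   j R k L u k, so j (u k) = k.  Then e x̄ u k z t and t' w k u ȳ h exhibit
   x̄ ȳ as the transversal element of x y, and uniqueness concludes. *)

Section Semigroup.
Variables (T : Type) (mul : T -> T -> T).
Hypothesis mulA : associative_op mul.

Local Infix "·" := mul (at level 40, left associativity).
Local Notation RstarS := (RstarIn mul (@fullset T)).
Local Notation LstarS := (LstarIn mul (@fullset T)).

(* [arw H] rewrites with [H : l = r] inside left-nested products: besides [l]
   itself it rewrites every [w · l1 · ... · ln] into [w · r1 · ... · rm], both
   sides of [H] being normalised by associativity first. *)
Ltac arw H :=
  let Hl := fresh in let Hw := fresh in
  let ty := type of H in
  let ty := eval unfold idem in ty in
  match ty with ?l = ?r =>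
    assert (Hl : l = r) by exact H;
    assert (Hw : forall w, w · l = w · r) by (intro; rewrite Hl; reflexivity)
  end;
  rewrite ?mulA in Hl; repeat setoid_rewrite mulA in Hw;
  rewrite ?mulA, ?Hl, ?Hw, ?mulA; clear Hl Hw.

Lemma rstar_fix a e : RstarS a e -> forall s, s · a = a -> s · e = e.
Proof. intros H s. exact (proj1 (H (Some s) None I I)). Qed.

Lemma rstar_cancel a e : RstarS a e -> forall s s', s · a = s' · a -> s · e = s' · e.
Proof. intros H s s'. exact (proj1 (H (Some s) (Some s') I I)). Qed.

Lemma rstar_idem_mul a e : RstarS a e -> idem mul e -> e · a = a.
Proof. intros H. exact (proj2 (H (Some e) None I I)). Qed.

Lemma lstar_fix a e : LstarS a e -> forall s, a · s = a -> e · s = e.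
Proof. intros H s. exact (proj1 (H (Some s) None I I)). Qed.

Lemma lstar_cancel a e : LstarS a e -> forall s s', a · s = a · s' -> e · s = e · s'.
Proof. intros H s s'. exact (proj1 (H (Some s) (Some s') I I)). Qed.

Lemma lstar_idem_mul a e : LstarS a e -> idem mul e -> a · e = a.
Proof. intros H. exact (proj2 (H (Some e) None I I)). Qed.

Lemma greenL_idem e p :
  idem mul e -> idem mul p -> GreenL mul e p -> e · p = e /\ p · e = p.
Proof.
  intros He Hp [A B]. split.
  - destruct A as [-> | [s ->]]; [exact Hp | arw Hp; reflexivity].
  - destruct B as [-> | [s ->]]; [exact He | arw He; reflexivity].
Qed.

Lemma greenR_idem f q :
  idem mul f -> idem mul q -> GreenR mul f q -> f · q = q /\ q · f = f.
Proof.
  intros Hf Hq [A B]. split.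
  - destruct B as [-> | [s ->]]; [exact Hf | arw Hf; reflexivity].
  - destruct A as [-> | [s ->]]; [exact Hq | arw Hq; reflexivity].
Qed.

(* The equations say a R b and b L c; as in a band, this forces a c = b. *)
Lemma R_L_mul a b c :
  idem mul (c · a) -> b · a = a -> a · b = b -> c · b = c -> b · c = b -> a · c = b.
Proof.
  intros ca_idem ba ab cb bc.
  assert (b_eq : b = b · (c · a) · b) by (arw bc; arw ba; arw ab; reflexivity).
  symmetry. rewrite b_eq at 1. rewrite <- ca_idem.
  arw bc. arw ba. arw ab. arw cb. reflexivity.
Qed.

Lemma regular_sandwiched x xb e f p q :
  regular mul x -> x = e · xb · f -> p · e = p -> f · q = q ->
  p · xb = xb -> xb · q = xb -> regular mul xb.
Proof.
  intros [a xa] x_eq pe fq pxb xbq. subst x. exists (f · a · e).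
  transitivity (p · (e · xb · f · a · (e · xb · f)) · q).
  - arw pe. arw pxb. arw fq. arw xbq. reflexivity.
  - rewrite xa. arw pe. arw pxb. arw fq. arw xbq. reflexivity.
Qed.

Lemma transversal_rep_intro (S0 : T -> Prop) a c t t' E F :
  S0 c -> S0 t -> S0 t' -> idem mul t -> idem mul t' ->
  RstarIn mul S0 c t -> LstarIn mul S0 c t' ->
  t · E · t = t -> t' · F · t' = t' -> a = E · c · F ->
  transversal_rep mul S0 a c.
Proof.
  intros c_S0 t_S0 t'_S0 t_idem t'_idem c_t c_t' tEt t'Ft' a_eq.
  assert (tc : t · c = c) by exact (proj2 (c_t (Some t) None t_S0 I) t_idem).
  assert (ct' : c · t' = c) by exact (proj2 (c_t' (Some t') None t'_S0 I) t'_idem).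
  split; [exact c_S0 |]. exists (E · t), (t' · F).
  split; [| split; [| split; [| split]]].
  - unfold idem. arw tEt. reflexivity.
  - unfold idem. arw t'Ft'. reflexivity.
  - rewrite a_eq. arw tc. arw ct'. reflexivity.
  - exists t. do 3 (split; [assumption |]). split; right.
    + exists E. reflexivity.
    + exists t. arw tEt. reflexivity.
  - exists t'. do 3 (split; [assumption |]). split; right.
    + exists F. reflexivity.
    + exists t'. arw t'Ft'. reflexivity.
Qed.

Section Transversal.
Variable S0 : T -> Prop.
Hypothesis idem_mul_closed : forall a b, idem mul a -> idem mul b -> idem mul (a · b).
Hypothesis S0_mul : subsemigroup mul S0.
Hypothesis S0_abundant : abundantIn mul S0.
Hypothesis S0_idem_comm :
  forall a b, S0 a -> S0 b -> idem mul a -> idem mul b -> a · b = b · a.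
Hypothesis S0_Lstar :
  forall a b, S0 a -> S0 b -> (LstarIn mul S0 a b <-> LstarS a b).
Hypothesis S0_Rstar :
  forall a b, S0 a -> S0 b -> (RstarIn mul S0 a b <-> RstarS a b).

Section Product.
Variables x y xb yb e f p q g h r s : T.
Hypotheses (xb_S0 : S0 xb) (e_idem : idem mul e) (f_idem : idem mul f)
  (x_eq : x = e · xb · f)
  (p_S0 : S0 p) (p_idem : idem mul p) (xb_p : RstarIn mul S0 xb p)
  (e_p : GreenL mul e p)
  (q_S0 : S0 q) (q_idem : idem mul q) (xb_q : LstarIn mul S0 xb q)
  (f_q : GreenR mul f q).
Hypotheses (yb_S0 : S0 yb) (g_idem : idem mul g) (h_idem : idem mul h)
  (y_eq : y = g · yb · h)
  (r_S0 : S0 r) (r_idem : idem mul r) (yb_r : RstarIn mul S0 yb r)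
  (g_r : GreenL mul g r)
  (s_S0 : S0 s) (s_idem : idem mul s) (yb_s : LstarIn mul S0 yb s)
  (h_s : GreenR mul h s).
Hypotheses (x_reg : regular mul x) (y_reg : regular mul y).

Local Notation u := (f · g).
Local Notation k := (q · r).

Let pe : p · e = p := proj2 (greenL_idem e_idem p_idem e_p).
Let fq : f · q = q := proj1 (greenR_idem f_idem q_idem f_q).
Let qf : q · f = f := proj2 (greenR_idem f_idem q_idem f_q).
Let gr : g · r = g := proj1 (greenL_idem g_idem r_idem g_r).
Let rg : r · g = r := proj2 (greenL_idem g_idem r_idem g_r).
Let hs : h · s = s := proj1 (greenR_idem h_idem s_idem h_s).

Let xb_p_S : RstarS xb p := proj1 (S0_Rstar xb_S0 p_S0) xb_p.
Let xb_q_S : LstarS xb q := proj1 (S0_Lstar xb_S0 q_S0) xb_q.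
Let yb_r_S : RstarS yb r := proj1 (S0_Rstar yb_S0 r_S0) yb_r.
Let yb_s_S : LstarS yb s := proj1 (S0_Lstar yb_S0 s_S0) yb_s.

Let pxb : p · xb = xb := rstar_idem_mul xb_p_S p_idem.
Let xbq : xb · q = xb := lstar_idem_mul xb_q_S q_idem.
Let ryb : r · yb = yb := rstar_idem_mul yb_r_S r_idem.
Let ybs : yb · s = yb := lstar_idem_mul yb_s_S s_idem.

Let qr_comm : q · r = r · q := S0_idem_comm q_S0 r_S0 q_idem r_idem.
Let k_idem : idem mul k := idem_mul_closed q_idem r_idem.
Let u_idem : idem mul u := idem_mul_closed f_idem g_idem.

Let u_k_u : u · k · u = u.
Proof. rewrite qr_comm. arw gr. arw qf. arw u_idem. reflexivity. Qed.

Let r_u_q : r · u · q = r · q.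
Proof.
  rewrite <- rg at 1. rewrite <- fq at 1.
  arw (idem_mul_closed g_idem f_idem). arw rg. arw fq. reflexivity.
Qed.

Let k_u_k : k · u · k = k.
Proof. rewrite qr_comm. arw qf. arw gr. arw r_u_q. reflexivity. Qed.

Let xb_k_yb : xb · k · yb = xb · yb.
Proof. arw xbq. arw ryb. reflexivity. Qed.

Section Witnesses.
Variables z w t t' : T.
Hypotheses (xb_z : xb · z · xb = xb) (yb_w : yb · w · yb = yb).
Hypotheses (t_S0 : S0 t) (t_idem : idem mul t) (c_t : RstarIn mul S0 (xb · yb) t).
Hypotheses (t'_S0 : S0 t') (t'_idem : idem mul t') (c_t' : LstarIn mul S0 (xb · yb) t').

Let c_S0 : S0 (xb · yb) := S0_mul xb_S0 yb_S0.
Let c_t_S : RstarS (xb · yb) t := proj1 (S0_Rstar c_S0 t_S0) c_t.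
Let c_t'_S : LstarS (xb · yb) t' := proj1 (S0_Lstar c_S0 t'_S0) c_t'.
Let t_c : t · (xb · yb) = xb · yb := rstar_idem_mul c_t_S t_idem.
Let c_t'_eq : xb · yb · t' = xb · yb := lstar_idem_mul c_t'_S t'_idem.

Let k_z_xb : k · z · xb = k.
Proof.
  assert (q_z_xb : q · (z · xb) = q) by (apply (lstar_fix xb_q_S); arw xb_z; reflexivity).
  rewrite qr_comm. arw q_z_xb. reflexivity.
Qed.

Let yb_w_k : yb · w · k = k.
Proof.
  assert (yb_w_r : yb · w · r = r) by (apply (rstar_fix yb_r_S); exact yb_w).
  rewrite qr_comm. arw yb_w_r. reflexivity.
Qed.

Let t_e : t · e = t.
Proof.
  assert (p_t : p · t = t) by (apply (rstar_fix c_t_S); arw pxb; reflexivity).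
  assert (t_p : t · p = t) by (rewrite (S0_idem_comm t_S0 p_S0 t_idem p_idem); exact p_t).
  rewrite <- t_p at 1. arw pe. exact t_p.
Qed.

Let h_t' : h · t' = t'.
Proof.
  assert (t'_s : t' · s = t') by (apply (lstar_fix c_t'_S); arw ybs; reflexivity).
  assert (s_t' : s · t' = t') by (rewrite (S0_idem_comm s_S0 t'_S0 s_idem t'_idem); exact t'_s).
  rewrite <- s_t'. arw hs. reflexivity.
Qed.

Let xb_k_z_t : xb · k · z · t = t.
Proof. apply (rstar_fix c_t_S). arw k_z_xb. arw xb_k_yb. reflexivity. Qed.

Let t'_w_k_yb : t' · w · k · yb = t'.
Proof. rewrite <- !mulA. apply (lstar_fix c_t'_S). arw yb_w_k. arw xb_k_yb. reflexivity. Qed.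

Let t_xb_u_k : t · xb · u · k = xb · k.
Proof.
  assert (j_idem : idem mul (k · z · t · xb)).
  { unfold idem. arw xb_k_z_t. arw t_idem. reflexivity. }
  assert (j_k : k · z · t · xb · k = k).
  { assert (j_r : k · z · t · xb · r = k · r).
    { apply (rstar_cancel yb_r_S). arw t_c. arw k_z_xb. reflexivity. }
    arw xbq. arw j_r. arw r_idem. reflexivity. }
  assert (j_u_k : k · z · t · xb · (u · k) = k).
  { apply R_L_mul.
    - apply idem_mul_closed; [apply idem_mul_closed |]; assumption.
    - arw k_idem. reflexivity.
    - exact j_k.
    - arw k_idem. reflexivity.
    - arw k_u_k. reflexivity. }
  rewrite <- xb_k_z_t at 1. arw j_u_k. reflexivity.
Qed.

Let k_u_yb_t' : k · u · yb · t' = k · yb.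
Proof.
  assert (j_idem : idem mul (yb · t' · w · k)).
  { unfold idem. arw t'_w_k_yb. arw t'_idem. reflexivity. }
  assert (k_j : k · (yb · t' · w · k) = k).
  { assert (q_j : q · (yb · t' · w · k) = q · k).
    { apply (lstar_cancel xb_q_S). arw c_t'_eq. arw yb_w_k. reflexivity. }
    arw ryb. arw q_j. arw q_idem. reflexivity. }
  assert (k_u_j : k · u · (yb · t' · w · k) = k).
  { apply R_L_mul.
    - apply idem_mul_closed; [| apply idem_mul_closed]; assumption.
    - arw k_idem. reflexivity.
    - exact k_u_k.
    - arw k_idem. reflexivity.
    - exact k_j. }
  rewrite <- t'_w_k_yb at 1. arw k_u_j. reflexivity.
Qed.

Lemma left_factor_absorbed : t · (e · xb · u · k · z) · t = t.
Proof. arw t_e. arw t_xb_u_k. arw xb_k_z_t. reflexivity. Qed.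

Lemma right_factor_absorbed : t' · (w · k · u · yb · h) · t' = t'.
Proof. arw h_t'. arw k_u_yb_t'. arw t'_w_k_yb. reflexivity. Qed.

Lemma mul_factorization : x · y = (e · xb · u · k · z) · (xb · yb) · (w · k · u · yb · h).
Proof.
  rewrite x_eq, y_eq. arw k_z_xb. arw yb_w_k. arw k_idem. arw u_k_u. reflexivity.
Qed.

End Witnesses.

Lemma transversal_rep_mul_factors : transversal_rep mul S0 (x · y) (xb · yb).
Proof.
  destruct (regular_sandwiched x_reg x_eq pe fq pxb xbq) as [z xb_z].
  destruct (regular_sandwiched y_reg y_eq rg hs ryb ybs) as [w yb_w].
  destruct (S0_abundant (S0_mul xb_S0 yb_S0))
    as [[t [t_S0 [t_idem c_t]]] [t' [t'_S0 [t'_idem c_t']]]].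
  apply transversal_rep_intro with (t := t) (t' := t')
    (E := e · xb · u · k · z) (F := w · k · u · yb · h);
    eauto using left_factor_absorbed, right_factor_absorbed, mul_factorization.
Qed.

End Product.

Lemma transversal_rep_mul x y xb yb :
  regular mul x -> regular mul y ->
  transversal_rep mul S0 x xb -> transversal_rep mul S0 y yb ->
  transversal_rep mul S0 (x · y) (xb · yb).
Proof.
  intros x_reg y_reg
    [xb_S0 [e [f [e_idem [f_idem [x_eq [[p [? [? [? ?]]]] [q [? [? [? ?]]]]]]]]]]]
    [yb_S0 [g [h [g_idem [h_idem [y_eq [[r [? [? [? ?]]]] [s [? [? [? ?]]]]]]]]]]].
  apply transversal_rep_mul_factors with e f p q g h r s; assumption.
Qed.

End Transversal.
End Semigroup.

Theorem proposition2p5 (T : Type) (mul : T -> T -> T)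
  (Hassoc : associative_op mul) (Hqa : quasi_adequate mul)
  (S0 : T -> Prop) (HS0 : adequate_transversal mul S0)
  (x y xb yb xyb : T) (Hx : regular mul x) (Hy : regular mul y)
  (Hxb : transversal_rep mul S0 x xb) (Hyb : transversal_rep mul S0 y yb)
  (Hxyb : transversal_rep mul S0 (mul x y) xyb) :
  xyb = mul xb yb.
Proof.
  destruct Hqa as [_ idem_mul_closed].
  destruct HS0 as [[S0_mul [S0_abundant [S0_Lstar S0_Rstar]]] [[_ S0_idem_comm] rep_unique]].
  destruct (rep_unique (mul x y)) as [c [_ c_unique]].
  rewrite <- (c_unique _ Hxyb). apply c_unique.
  eapply transversal_rep_mul; eauto.
Qed.
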